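(* Let $p$ be a prime and let $n\geq 1$, $k\geq 1$ be integers. For $s\geq k$ and $j\geq 0$ define numbers $M(t_s^{p^j})$ recursively by: $M(t_s^{p^j})=2s-1$ if $k\leq s\leq n+k-1$, and $$M(t_{s}^{p^j})=\max\{2s-1,\ p\,M(t_{s-n}^{p^{j+n-1}})+1\}\quad\text{if } s\geq n+k.$$ Let $s_0=\max\left\{\left[\frac{2pn+p-2}{2(p-1)}\right],\ n+k-1\right\}$, where $[x]$ denotes the integer part of $x$. Then: (1) $M(t_{s}^{p^j})>M(t_{s-1}^{p^j})+1$ (for $s>k$); (2) for $k\leq s\leq s_0$, $M(t_s^{p^j})=2s-1$; (3) for $s>s_0$, $p\,M(t_{s-n}^{p^j})+1\geq 2s-1$ and $M(t_s^{p^j})= p\,M(t_{s-n}^{p^{j}})+1$.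
   Context: The numbers $M(t_s^{p^j})$ are the ''May filtrations'' of the elements $t_s^{p^j}$ of the Hopf algebra $S(n,k)=\mathbb{Z}/p[t_k,t_{k+1},\dots]/(t_s^{p^n}-t_s)$; for this statement only the recursive definition above is needed. *)

From mathcomp Require Import all_boot.
Set Implicit Arguments. Unset Strict Implicit. Unset Printing Implicit Defensive.

(* May filtration recursion, with explicit fuel (fuel = s suffices when n >= 1).
   Mf p n k fuel s j  models  M(t_s^{p^j}) for s >= k. *)
Fixpoint Mf (p n k fuel s j : nat) : nat :=
  match fuel with
  | 0 => 0
  | fuel'.+1 =>
      if s <= n + k - 1 then 2 * s - 1
      else maxn (2 * s - 1) (p * Mf p n k fuel' (s - n) (j + n - 1) + 1)
  end.

Definition M (p n k s j : nat) : nat := Mf p n k s s j.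

Definition s0 (p n k : nat) : nat :=
  maxn ((2 * p * n + p - 2) %/ (2 * (p - 1))) (n + k - 1).

From mathcomp Require Import all_boot.
From mathcomp Require Import zify.

(* The value of M(t_s^{p^j}) does not depend on j, and it is always at least
   the linear term 2s - 1.  Since p(2(s - n) - 1) + 1 <= 2s - 1 holds exactly
   when s <= [(2pn + p - 2)/(2(p - 1))], the linear term wins up to s_0 (all
   earlier values being linear by induction), whereas beyond s_0 the recursive
   term already dominates 2s - 1 through the lower bound on M(t_{s-n}).  The
   increments of at least 2 propagate through the recursion because
   p * (a + 2) >= p * a + 2. *)

Section MayFiltration.
Variables (p n k : nat).
Hypotheses (n_gt0 : 0 < n) (k_gt0 : 0 < k).

Lemma Mf_indep_j fuel s j j' : Mf p n k fuel s j = Mf p n k fuel s j'.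
Proof.
elim: fuel s j j' => [|fuel IH] s j j' //=.
by rewrite (IH _ (j + n - 1) 0) (IH _ (j' + n - 1) 0).
Qed.

Lemma Mf_fuel_indep f g s j :
  s <= f -> s <= g -> Mf p n k f s j = Mf p n k g s j.
Proof.
elim: f g s j => [|f IH] [|g] s j //=.
- by move=> s_le0 _; have -> : s = 0 by lia.
- by move=> _ s_le0; have -> : s = 0 by lia.
- by move=> s_le_f s_le_g; case: ifP => // _; rewrite (IH g); lia.
Qed.

Lemma M_small s j : s <= n + k - 1 -> M p n k s j = 2 * s - 1.
Proof. by rewrite /M; case: s => [|s] //= ->. Qed.

Lemma M_large s j : n + k <= s ->
  M p n k s j = maxn (2 * s - 1) (p * M p n k (s - n) j + 1).
Proof.
rewrite /M; case: s => [|s] s_large /=; first lia.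
have -> : (s.+1 <= n + k - 1) = false by lia.
rewrite (Mf_indep_j _ _ _ j) (Mf_fuel_indep s (s.+1 - n)) //; lia.
Qed.

Lemma M_ge_linear s j : 2 * s - 1 <= M p n k s j.
Proof.
case: (leqP s (n + k - 1)) => s_large; first by rewrite M_small.
by rewrite M_large ?leq_maxl //; lia.
Qed.

Lemma M_step_ge2 s j : 0 < p -> k < s ->
  M p n k (s - 1) j + 2 <= M p n k s j.
Proof.
move=> p_gt0; elim/ltn_ind: s => s IH k_lt_s.
case: (leqP s (n + k - 1)) => s_large.
  by rewrite !M_small //; lia.
case: (leqP (s - 1) (n + k - 1)) => s1_large.
  by rewrite M_small // M_large; [apply: leq_trans (leq_maxl _ _); lia | lia].
rewrite (M_large s) ?(M_large (s - 1)); try lia.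
have -> : s - 1 - n = (s - n) - 1 by lia.
have step := IH (s - n) ltac:(lia) ltac:(lia).
have : p * M p n k (s - n - 1) j + 2 <= p * M p n k (s - n) j.
  apply: leq_trans (leq_mul (leqnn p) step); rewrite mulnDr; lia.
lia.
Qed.

Hypothesis p_gt1 : 1 < p.

Let d := (2 * p * n + p - 2) %/ (2 * (p - 1)).

Lemma recursive_term_le_linear s : n < s -> s <= d ->
  p * (2 * (s - n) - 1) + 1 <= 2 * s - 1.
Proof. by move=> n_lt_s; rewrite /d leq_divRL; nia. Qed.

Lemma linear_le_recursive_term s : d < s ->
  2 * s - 1 <= p * (2 * (s - n) - 1) + 1.
Proof. by rewrite /d ltn_divLR; nia. Qed.

Lemma M_le_s0 s j : s <= s0 p n k -> M p n k s j = 2 * s - 1.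
Proof.
elim/ltn_ind: s j => s IH j; rewrite /s0 leq_max.
case: (leqP s (n + k - 1)) => s_large; first by rewrite M_small.
rewrite orbF => s_le_d.
rewrite M_large; last lia.
have lt_s : s - n < s by lia.
have le_s0 : s - n <= s0 p n k.
  by rewrite /s0 leq_max (leq_trans (leq_subr n s) s_le_d).
rewrite IH //.
by apply/maxn_idPl/recursive_term_le_linear => //; lia.
Qed.

Lemma M_gt_s0 s j : s0 p n k < s ->
  2 * s - 1 <= p * M p n k (s - n) j + 1 /\
  M p n k s j = p * M p n k (s - n) j + 1.
Proof.
rewrite /s0 gtn_max => /andP [d_lt_s s_large].
have linear_le : 2 * s - 1 <= p * M p n k (s - n) j + 1.
  apply: leq_trans (linear_le_recursive_term _ d_lt_s) _.
  by rewrite leq_add2r leq_mul2l M_ge_linear orbT.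
by split => //; rewrite M_large; [apply/maxn_idPr | lia].
Qed.

End MayFiltration.

Theorem lemma2p4 (p n k : nat) (hp : prime p) (hn : 1 <= n) (hk : 1 <= k) :
  (forall s j, k < s -> M p n k s j > M p n k (s - 1) j + 1) /\
  (forall s j, k <= s <= s0 p n k -> M p n k s j = 2 * s - 1) /\
  (forall s j, s0 p n k < s ->
     p * M p n k (s - n) j + 1 >= 2 * s - 1 /\
     M p n k s j = p * M p n k (s - n) j + 1).
Proof.
have p_gt1 := prime_gt1 hp.
split; [|split].
- move=> s j k_lt_s.
  by have := @M_step_ge2 p n k hn hk s j (prime_gt0 hp) k_lt_s; lia.
- by move=> s j /andP [_ s_le_s0]; apply: M_le_s0.
- by move=> s j; apply: M_gt_s0.
Qed.
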